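(* Let $q\ge 3$, $k\ge 1$ and $h\geq 2$ be integers with $h\le\lfloor q/2\rfloor$. Then $$SO(L_{q,h,k})=(2qk-5k+5)\sqrt{2}+(4k-4)\sqrt{13}.$$
   Context: For a finite simple graph $G$, $SO(G)=\sum_{uv\in E(G)}\sqrt{d_u^2+d_v^2}$, where $d_u$ is the degree of $u$ in $G$ (the Sombor index). The graph $L_{q,h,k}$ is the link of $k$ disjoint copies $G_1,\ldots,G_k$ of the cycle $C_q$ with respect to vertices $x_i,y_i\in V(G_i)$ at distance $h$ in $G_i$; i.e. it is obtained from the disjoint union of the $k$ cycles by adding the edges $y_ix_{i+1}$ for $i=1,\ldots,k-1$. *)

From HB Require Import structures.
From mathcomp Require Import all_boot all_order all_algebra.
From mathcomp Require Import reals.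
Set Implicit Arguments. Unset Strict Implicit. Unset Printing Implicit Defensive.
Import Order.TTheory GRing.Theory Num.Theory.

(* A finite simple graph is given by an edge relation [e] on a finType
   (intended symmetric and irreflexive). *)
Definition degree (T : finType) (e : rel T) (u : T) : nat := #|[set v | e u v]|.

(* Each unordered edge {u,v} of a symmetric relation is counted twice in the
   sum over ordered adjacent pairs (u,v), hence the factor 1/2. *)
Definition sombor (R : rcfType) (T : finType) (e : rel T) : R :=
  (2%:R)^-1 * \sum_(u : T) \sum_(v : T | e u v)
     Num.sqrt (((degree e u)%:R : R) ^+ 2 + ((degree e v)%:R : R) ^+ 2).

Definition cycle_adj (q : nat) (a b : 'I_q) : bool :=
  (b == (a.+1 %% q) :> nat) || (a == (b.+1 %% q) :> nat).

(* Link of k copies G_1..G_k of a graph (vertex set 'I_q, edge relation g)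
   with respect to vertices x, y (the same in each copy): the disjoint union
   plus edges y_i x_{i+1}, i = 1..k-1.  Vertices are pairs (copy i, vertex j). *)
Definition link_adj (k q : nat) (g : rel 'I_q) (x y : 'I_q)
    (u v : 'I_k * 'I_q) : bool :=
  ((u.1 == v.1) && g u.2 v.2)
  || [&& (v.1 == u.1.+1 :> nat), u.2 == y & v.2 == x]
  || [&& (u.1 == v.1.+1 :> nat), v.2 == y & u.2 == x].

Definition cycle_dist (q : nat) (a b : 'I_q) : nat :=
  minn ((a + q - b) %% q) ((b + q - a) %% q).

(* L_{q,h,k}: link of k copies of C_q w.r.t. x_i, y_i at distance h. *)
Definition L_adj (q k : nat) (x y : 'I_q) : rel ('I_k * 'I_q) :=
  @link_adj k q (@cycle_adj q) x y.

From HB Require Import structures.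
From mathcomp Require Import all_boot all_order all_algebra.
From mathcomp Require Import reals.
From mathcomp Require Import zify ring.
Import Order.TTheory GRing.Theory Num.Theory.

(* Every vertex of L_{q,h,k} has degree 2 plus its excess, the number of link
   edges y_i x_{i+1} at it; as x <> y the excess is 0 or 1, and the 2(k-1)
   vertices of excess 1 are never adjacent inside a cycle because x and y are
   at distance at least 2.  Hence a cycle edge uv has Sombor weight
   w(2,2) + (e_u + e_v) (w(3,2) - w(2,2)), affine in the excesses, while link
   edges have weight w(3,3).  Summing over the kq cycle edges counts every
   excess twice, so SO = kq w(2,2) + 4(k-1) (w(3,2) - w(2,2)) + (k-1) w(3,3). *)

Section BigPairs.
Variables (R : Type) (idx : R) (op : Monoid.com_law idx).

Lemma big_orb (I : finType) (P Q : pred I) (F : I -> R) :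
  (forall i, P i -> ~~ Q i) ->
  \big[op/idx]_(i | P i || Q i) F i =
  op (\big[op/idx]_(i | P i) F i) (\big[op/idx]_(i | Q i) F i).
Proof.
move=> PnQ; rewrite big_mkcond [in RHS]big_mkcond [X in op _ X]big_mkcond.
rewrite -big_split; apply: eq_bigr => i _.
by case: (boolP (P i)) => [/PnQ /negbTE -> | _]; rewrite /= ?Monoid.mulm1 ?Monoid.mul1m.
Qed.

Lemma big_pair (I J : finType) (F : I * J -> R) :
  \big[op/idx]_u F u = \big[op/idx]_i \big[op/idx]_j F (i, j).
Proof. by rewrite pair_bigA; apply: eq_bigr => -[]. Qed.

Lemma big_pair_reindex (I J : finType) (g : J -> J) (F : I * J -> R) :
  injective g -> \big[op/idx]_u F (u.1, g u.2) = \big[op/idx]_u F u.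
Proof.
move=> g_inj; rewrite !big_pair; apply: eq_bigr => i _.
by rewrite [RHS](reindex_inj g_inj).
Qed.

End BigPairs.

Lemma sum_eq_andb (I : finType) (i0 : I) (b : bool) :
  (\sum_i ((i == i0) && b) = b)%N.
Proof. by rewrite (bigD1 i0) //= eqxx big1 ?addn0 // => i /negbTE ->. Qed.

Lemma sum_ord_succ_lt (k : nat) : (\sum_(i < k) (i.+1 < k) = k.-1)%N.
Proof.
case: k => [|k]; first by rewrite big_ord0.
rewrite big_ord_recr /= ltnn addn0.
under eq_bigr => i _ do rewrite ltnS ltn_ord.
by rewrite sum_nat_const card_ord muln1.
Qed.

Lemma sum_ord_gt0 (k : nat) : (\sum_(i < k) (0 < i) = k.-1)%N.
Proof.
case: k => [|k]; first by rewrite big_ord0.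
by rewrite big_ord_recl /= sum_nat_const card_ord muln1.
Qed.

Section Cycle.
Variable q : nat.
Implicit Types a b : 'I_q.

Lemma cycle_adjC : symmetric (@cycle_adj q).
Proof. by move=> a b; rewrite /cycle_adj orbC. Qed.

Lemma cycle_adjE a b : cycle_adj a b = (b == ordS a) || (b == ord_pred a).
Proof.
rewrite /cycle_adj; congr (_ || _); apply/eqP/eqP => [ab | ->].
- by rewrite -[b]ordSK; congr ord_pred; apply: val_inj; rewrite /= ab.
- exact/esym/(congr1 val (ord_predK a)).
Qed.

Lemma cycle_distC a b : cycle_dist a b = cycle_dist b a.
Proof. exact: minnC. Qed.

Lemma cycle_distxx a : cycle_dist a a = 0%N.
Proof. by rewrite /cycle_dist addKn modnn minnn. Qed.

Lemma cycle_dist_ordS a : (cycle_dist a (ordS a) <= 1)%N.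
Proof.
rewrite /cycle_dist geq_min; apply/orP; right => /=.
have a_lt := ltn_ord a.
have [aS_lt | aS_ge] := ltnP a.+1 q.
- have -> : (a.+1 %% q + q - a = q + 1)%N by rewrite modn_small //; lia.
  by rewrite modnDl leq_mod.
- have -> : a.+1 = q by lia.
  have -> : (q %% q + q - a = 1)%N by rewrite modnn; lia.
  exact: leq_mod.
Qed.

Lemma cycle_dist_adj a b : cycle_adj a b -> (cycle_dist a b <= 1)%N.
Proof.
rewrite cycle_adjE => /orP[/eqP -> | /eqP ->]; first exact: cycle_dist_ordS.
by rewrite cycle_distC -{2}(ord_predK a) cycle_dist_ordS.
Qed.

Hypothesis q_ge3 : (2 < q)%N.

Lemma cycle_adj_irr : irreflexive (@cycle_adj q).
Proof.
move=> a; rewrite /cycle_adj orbb; apply/negbTE.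
have a_lt := ltn_ord a.
have [aS_lt | aS_ge] := ltnP a.+1 q; first by rewrite modn_small //; lia.
have -> : a.+1 = q by lia.
by rewrite modnn; lia.
Qed.

Lemma ordS_neq_ord_pred a : ordS a != ord_pred a.
Proof.
apply/eqP => /(congr1 (@ordS q)); rewrite ord_predK => /(congr1 val) /=.
have a_lt := ltn_ord a.
have [aS_lt | aS_ge] := ltnP a.+1 q.
- rewrite (modn_small aS_lt).
  have [aSS_lt | aSS_ge] := ltnP a.+2 q; first by rewrite modn_small //; lia.
  have -> : a.+2 = q by lia.
  by rewrite modnn; lia.
- have -> : a.+1 = q by lia.
  by rewrite modnn modn_small; lia.
Qed.

Lemma big_cycle_adj (R : Type) (idx : R) (op : Monoid.com_law idx) a
    (F : 'I_q -> R) :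
  \big[op/idx]_(b | cycle_adj a b) F b = op (F (ordS a)) (F (ord_pred a)).
Proof.
rewrite (bigD1 (ordS a)) ?cycle_adjE ?eqxx //= (bigD1 (ord_pred a)) /=; last first.
  by rewrite cycle_adjE eqxx orbT eq_sym ordS_neq_ord_pred.
rewrite big1 ?Monoid.mulm1 // => b.
by rewrite cycle_adjE => /andP[/andP[/orP[] -> ]].
Qed.

End Cycle.

Section SomborWeight.
Variable R : rcfType.
Local Open Scope ring_scope.

Definition sombor_weight (m n : nat) : R := Num.sqrt (m%:R ^+ 2 + n%:R ^+ 2).

Lemma somborE (T : finType) (e : rel T) :
  sombor R e = 2^-1 * \sum_u \sum_(v | e u v) sombor_weight (degree e u) (degree e v).
Proof. by []. Qed.

Lemma sombor_weightC m n : sombor_weight m n = sombor_weight n m.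
Proof. by rewrite /sombor_weight addrC. Qed.

Lemma sombor_weight_diag n : sombor_weight n n = n%:R * Num.sqrt 2%:R.
Proof.
rewrite /sombor_weight -mulr2n -[_ *+ 2]mulr_natr sqrtrM ?exprn_ge0 ?ler0n //.
by rewrite sqrtr_sqr ger0_norm ?ler0n.
Qed.

Lemma sombor_weight32 : sombor_weight 3 2 = Num.sqrt 13%:R.
Proof. by rewrite /sombor_weight -!natrX -natrD. Qed.

Lemma sombor_weight_affine m n : (m <= 1)%N -> (n <= 1)%N -> (m * n = 0)%N ->
  sombor_weight m.+2 n.+2 =
  sombor_weight 2 2 + (m + n)%:R * (sombor_weight 3 2 - sombor_weight 2 2).
Proof.
case: m => [|[|//]]; case: n => [|[|//]] // _ _ _.
- by rewrite addn0 mul0r addr0.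
- by rewrite sombor_weightC add0n mul1r addrC subrK.
- by rewrite addn0 mul1r addrC subrK.
Qed.

End SomborWeight.

Section LinkOfCycles.
Variables (q k : nat) (x y : 'I_q).
Local Notation vertex := ('I_k * 'I_q)%type.
Implicit Types u v : vertex.

Definition link_next u v : bool := [&& v.1 == u.1.+1 :> nat, u.2 == y & v.2 == x].

Lemma L_adjE u v :
  L_adj x y u v = ((u.1 == v.1) && cycle_adj u.2 v.2) || link_next u v || link_next v u.
Proof. by []. Qed.

Definition excess u : nat := ((u.2 == y) && (u.1.+1 < k)%N) + ((u.2 == x) && (0 < u.1)%N).

Lemma sum_excess : (\sum_u excess u = 2 * k.-1)%N.
Proof.
rewrite big_pair.
under eq_bigr => i _ do rewrite big_split /= !sum_eq_andb.
by rewrite big_split /= sum_ord_succ_lt sum_ord_gt0 addnn mul2n.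
Qed.

Lemma sum_excess_neighbours :
  (\sum_u (2 * excess u + excess (u.1, ordS u.2) + excess (u.1, ord_pred u.2))
   = 8 * k.-1)%N.
Proof.
rewrite big_split big_split /= -big_distrr /=.
rewrite big_pair_reindex; last exact: ordS_inj.
rewrite big_pair_reindex; last exact: ord_pred_inj.
by rewrite sum_excess; lia.
Qed.

Lemma card_link_next u : #|[pred v | link_next u v]| = (u.2 == y) && (u.1.+1 < k)%N.
Proof.
case: (boolP (u.2 == y)) => uy /=; last first.
  by apply: eq_card0 => v; rewrite inE /link_next (negbTE uy) andbF.
case: ltnP => [uS_lt | uS_ge] /=.
- rewrite -(card1 (Ordinal uS_lt, x)); apply: eq_card => -[j b].
  by rewrite !inE /link_next uy xpair_eqE.
- apply: eq_card0 => v; rewrite inE /link_next; apply/negbTE.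
  by apply/negP => /andP[/eqP v1 _]; move: (ltn_ord v.1); rewrite v1 ltnNge uS_ge.
Qed.

Lemma card_link_prev u : #|[pred v | link_next v u]| = (u.2 == x) && (0 < u.1)%N.
Proof.
case: (boolP (u.2 == x)) => ux /=; last first.
  by apply: eq_card0 => v; rewrite inE /link_next (negbTE ux) !andbF.
case: posnP => [u1_eq0 | u1_gt0] /=.
- apply: eq_card0 => v; rewrite inE /link_next u1_eq0.
  by case: eqP.
- have u1P_lt : (u.1.-1 < k)%N by have := ltn_ord u.1; lia.
  rewrite -(card1 (Ordinal u1P_lt, y)); apply: eq_card => -[j b].
  rewrite !inE /link_next ux xpair_eqE andbT /=; congr (_ && _).
  by rewrite -val_eqE /=; apply/eqP/eqP; lia.
Qed.

Hypothesis q_ge3 : (2 < q)%N.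

Lemma big_L_adj (R : Type) (idx : R) (op : Monoid.com_law idx) u (F : vertex -> R) :
  \big[op/idx]_(v | L_adj x y u v) F v =
  op (op (F (u.1, ordS u.2)) (F (u.1, ord_pred u.2)))
     (op (\big[op/idx]_(v | link_next u v) F v) (\big[op/idx]_(v | link_next v u) F v)).
Proof.
pose same_copy v := (u.1 == v.1) && cycle_adj u.2 v.2.
rewrite (eq_bigl (fun v => same_copy v || (link_next u v || link_next v u))); last first.
  by move=> v; rewrite L_adjE orbA.
rewrite big_orb; last first.
  move=> v /andP[/eqP u1 _]; rewrite /link_next -u1.
  by apply/norP; split; apply/negP => /andP[/eqP]; lia.
rewrite big_orb; last first.
  by move=> v /and3P[/eqP uv _ _]; apply/negP => /andP[/eqP]; lia.
congr (op _ _).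
transitivity (\big[op/idx]_(i | i == u.1) \big[op/idx]_(b | cycle_adj u.2 b) F (i, b)).
  by rewrite pair_big_dep; apply: eq_big => [[i b] | [i b] _]; rewrite //= eq_sym.
by rewrite big_pred1_eq big_cycle_adj.
Qed.

Lemma degree_L_adj u : degree (L_adj x y) u = (2 + excess u)%N.
Proof.
rewrite /degree -sum1dep_card big_L_adj !sum1dep_card !cardsE.
by rewrite card_link_next card_link_prev.
Qed.

Hypotheses (xy_neq : x != y) (xy_nadj : ~~ cycle_adj x y).

Lemma excess_le1 u : (excess u <= 1)%N.
Proof.
rewrite /excess; case: (u.2 =P y) => [-> | _]; last by rewrite leq_b1.
by rewrite eq_sym (negbTE xy_neq) addn0 leq_b1.
Qed.

Lemma excess_link_next u v : link_next u v -> excess u = 1%N /\ excess v = 1%N.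
Proof.
case/and3P => /eqP v1 /eqP u2 /eqP v2.
have := ltn_ord v.1; rewrite v1 => uS_lt.
by rewrite /excess u2 v2 !eqxx (negbTE xy_neq) eq_sym (negbTE xy_neq) v1 uS_lt.
Qed.

Lemma excess_cycle_adj (i : 'I_k) a b :
  cycle_adj a b -> (excess (i, a) * excess (i, b) = 0)%N.
Proof.
have excess_pos c : (0 < excess (i, c))%N -> (c == x) || (c == y).
  by rewrite /excess /=; case: (c == x); case: (c == y).
move=> ab; case: (posnP (excess (i, a))) => [-> // | /excess_pos a_xy].
case: (posnP (excess (i, b))) => [-> | /excess_pos b_xy]; first by rewrite muln0.
move: ab; case/orP: a_xy => /eqP ->; case/orP: b_xy => /eqP ->;
  by rewrite ?cycle_adj_irr // ?[cycle_adj y x]cycle_adjC (negbTE xy_nadj).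
Qed.

Local Open Scope ring_scope.

Lemma sum_neighbour_weights (R : rcfType) u :
  \sum_(v | L_adj x y u v)
     sombor_weight R (degree (L_adj x y) u) (degree (L_adj x y) v) =
  sombor_weight R 2 2 *+ 2
  + (2 * excess u + excess (u.1, ordS u.2) + excess (u.1, ord_pred u.2))%N%:R
    * (sombor_weight R 3 2 - sombor_weight R 2 2)
  + (excess u)%:R * sombor_weight R 3 3.
Proof.
case: u => i a; rewrite big_L_adj /= !degree_L_adj !add2n.
have cycle_weight b : cycle_adj a b ->
    sombor_weight R (excess (i, a)).+2 (excess (i, b)).+2 =
    sombor_weight R 2 2
    + (excess (i, a) + excess (i, b))%:R * (sombor_weight R 3 2 - sombor_weight R 2 2).
  by move=> ab; rewrite sombor_weight_affine ?excess_le1 ?excess_cycle_adj.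
have next_weight v : link_next (i, a) v ->
    sombor_weight R (excess (i, a)).+2 (degree (L_adj x y) v) = sombor_weight R 3 3.
  by rewrite degree_L_adj; case/excess_link_next => -> ->.
have prev_weight v : link_next v (i, a) ->
    sombor_weight R (excess (i, a)).+2 (degree (L_adj x y) v) = sombor_weight R 3 3.
  by rewrite degree_L_adj; case/excess_link_next => -> ->.
rewrite !cycle_weight ?cycle_adjE ?eqxx ?orbT //.
rewrite (eq_bigr _ next_weight) (eq_bigr _ prev_weight).
rewrite (sumr_const [pred v | link_next _ v]) (sumr_const [pred v | link_next v _]).
rewrite card_link_next card_link_prev -mulrnDr -/(excess (i, a)).
by rewrite -[sombor_weight R 3 3 *+ _]mulr_natl; ring.
Qed.

Lemma sombor_L_adj (R : rcfType) :
  sombor R (@L_adj q k x y) =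
  (k * q)%N%:R * sombor_weight R 2 2
  + (4 * k.-1)%N%:R * (sombor_weight R 3 2 - sombor_weight R 2 2)
  + (k.-1)%:R * sombor_weight R 3 3.
Proof.
rewrite somborE; under eq_bigr => u _ do rewrite sum_neighbour_weights.
rewrite !big_split /= sumr_const card_prod !card_ord -!mulr_suml -!natr_sum.
by rewrite sum_excess_neighbours sum_excess; field.
Qed.

End LinkOfCycles.

Local Open Scope ring_scope.

Theorem mainTheorem9 (R : realType) (q h k : nat) (x y : 'I_q) :
  (3 <= q)%N -> (1 <= k)%N -> (2 <= h)%N -> (h <= q %/ 2)%N ->
  cycle_dist x y = h ->
  sombor R (@L_adj q k x y) =
    ((2 * q * k + 5)%:R - (5 * k)%:R) * Num.sqrt 2%:R
    + ((4 * k)%:R - 4%:R) * Num.sqrt 13%:R.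
Proof.
move=> q_ge3 k_gt0 h_ge2 _ dist_xy.
have dist_gt1 : (1 < cycle_dist x y)%N by rewrite dist_xy.
have xy_neq : x != y by apply: contraTneq dist_gt1 => ->; rewrite cycle_distxx.
have xy_nadj : ~~ cycle_adj x y.
  by apply: contraTN dist_gt1 => /cycle_dist_adj; rewrite leqNgt.
rewrite sombor_L_adj // !sombor_weight_diag sombor_weight32.
by case: k k_gt0 => // k _ /=; ring.
Qed.
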